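(* Let $F$ be a sensori-computational device with a monoidal variator $(D,\odot)$ for $Y=Y(F)$. If some sensori-computational device output simulates $F$ modulo $\Delta_F^{D};\diamond_Y^{D}$, then some sensori-computational device output simulates $F$ modulo $\Delta_F^{D};\int_Y^{D}$.
   Context: A sensori-computational device is a 6-tuple $F=(V,V_0,Y,\tau,C,c)$ where $V$ is a non-empty finite set of states, $V_0\subseteq V$ a non-empty set of initial states, $Y=Y(F)$ a finite set of observations, $\tau:V\times V\to\mathcal{P}(Y)$, $C$ a set of outputs, $c:V\to\mathcal{P}(C)\setminus\{\emptyset\}$. A string $y_1\cdots y_n$ reaches $w$ from $v$ if there are states $w_0=v,\dots,w_n=w$ with $y_i\in\tau(w_{i-1},w_i)$; $\mathcal{R}_F(s)$ is the set of states reached by $s$ from some initial state; $\mathcal{L}(F)=\{s\in Y^*:\mathcal{R}_F(s)\ne\emptyset\}$; $\mathcal{C}_F(s)=\bigcup_{v\in\mathcal{R}_F(s)}c(v)$. For a relation $R\subseteq A\times B$ between sets of strings, $F'$ output simulates $F$ modulo $R$ if for every $s\in\mathcal{L}(F)$: (1) some $t\in\mathcal{L}(F')$ has $s\,R\,t$; (2) every $t\in B$ with $s\,R\,t$ satisfies $t\in\mathcal{L}(F')$ and $\mathcal{C}_F(s)\supseteq\mathcal{C}_{F'}(t)$. Relation composition: $R_1;R_2=\{(u,v):\exists r\ (u,r)\in R_1,(r,v)\in R_2\}$. A monoidal variator for $Y$ is a monoid $(D,\oplus,e_D)$ with a right action $\odot:Y\times D\to Y$ ($y\odot e_D=y$,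 $(y\odot d_1)\odot d_2=y\odot(d_1\oplus d_2)$). Its delta relation $\Delta_F^{D}\subseteq\mathcal{L}(F)\times(\{\epsilon\}\cup Y\cdot D^* )$ consists of $(\epsilon,\epsilon)$; $(y_0,y_0)$ for $y_0\in Y\cap\mathcal{L}(F)$; and $(y_0y_1\cdots y_m,\ y_0d_1\cdots d_m)$ for $y_0\cdots y_m\in\mathcal{L}(F)$, $m\ge1$, whenever $y_k=y_{k-1}\odot d_k$ for all $k$. The monoid disaggregator $\diamond_Y^{D}$ is the relation on $\{\epsilon\}\cup Y\cdot D^*$ consisting of $(\epsilon,\epsilon)$, $(y_0,y_0)$ for $y_0\in Y$, and $(y_0d_1\cdots d_m,\ y_0d_1'\cdots d_n')$ for $m,n\ge1$ whenever $d_1\oplus\cdots\oplus d_m=d_1'\oplus\cdots\oplus d_n'$. The monoid integrator is the function $\int_Y^{D}:\{\epsilon\}\cup Y\cdot D^*\to\{\epsilon\}\cup Y\cup Y\cdot D$ with $\epsilon\mapsto\epsilon$, $y_0\mapsto y_0$, and $y_0d_1\cdots d_m\mapsto y_0(d_1\oplus\cdots\oplus d_m)$ for $m\ge1$. *)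

From mathcomp Require Import ssreflect ssrfun ssrbool eqtype ssrnat seq choice fintype.
From Stdlib Require List.

Set Implicit Arguments.
Unset Strict Implicit.

(* A sensori-computational device whose observations live in the type A and
   whose outputs live in the type C.
   - states : finite type V (non-empty since V0 is non-empty)
   - init : V0 (non-empty)
   - obs : Y(F), a finite set of observations (a list of elements of A)
   - trans v w y : y \in tau(v,w); tau(v,w) is a subset of Y(F)
   - out v c : c \in c(v); c(v) is non-empty *)
Record scd (A C : Type) := SCD {
  st : finType;
  init : st -> Prop;
  init_ne : exists v, init v;
  obs : list A;
  trans : st -> st -> A -> Prop;
  trans_obs : forall v w y, trans v w y -> List.In y obs;
  out : st -> C -> Prop;
  out_ne : forall v, exists c, out v c
}.

Section Devices.
Variables (A C : Type) (F : scd A C).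

Fixpoint reaches (s : list A) (v w : st F) : Prop :=
  match s with
  | nil => v = w
  | y :: s' => exists u, @trans _ _ F v u y /\ reaches s' u w
  end.

Definition reached (s : list A) (w : st F) : Prop :=
  exists v, @init _ _ F v /\ reaches s v w.

Definition inL (s : list A) : Prop := exists w, reached s w.

Definition outs (s : list A) (c : C) : Prop :=
  exists w, reached s w /\ @out _ _ F w c.

End Devices.

Definition output_simulates (A B C : Type) (F' : scd B C) (F : scd A C)
  (R : list A -> list B -> Prop) : Prop :=
  forall s, inL F s ->
    (exists t, inL F' t /\ R s t) /\
    (forall t, R s t -> inL F' t /\ (forall c, outs F' t c -> outs F s c)).

Definition rcomp (A B E : Type) (R1 : A -> B -> Prop) (R2 : B -> E -> Prop)
  : A -> E -> Prop :=
  fun u v => exists r, R1 u r /\ R2 r v.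

Record monoidal_variator (Y D : Type) := MV {
  mop : D -> D -> D;
  munit : D;
  mopA : forall a b c, mop a (mop b c) = mop (mop a b) c;
  mop1d : forall a, mop munit a = a;
  mopd1 : forall a, mop a munit = a;
  act : Y -> D -> Y;
  act1 : forall y, act y munit = y;
  actM : forall y d1 d2, act (act y d1) d2 = act y (mop d1 d2)
}.

Section Variator.
Variables (Y D : Type) (M : monoidal_variator Y D).

(* Strings of {eps} u Y.D^* are encoded as lists over the disjoint union Y + D. *)
Definition ydstr (y0 : Y) (ds : list D) : list (Y + D) := inl y0 :: map inr ds.

Definition msum (d : D) (ds : list D) : D := List.fold_left (mop M) ds d.

Fixpoint dchain (yprev : Y) (ys : list Y) (ds : list D) : Prop :=
  match ys, ds with
  | nil, nil => True
  | y :: ys', d :: ds' => y = act M yprev d /\ dchain y ys' ds'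
  | _, _ => False
  end.

Definition delta_rel (C : Type) (F : scd Y C) (s : list Y) (t : list (Y + D))
  : Prop :=
  inL F s /\
  ((s = nil /\ t = nil) \/
   (exists y0, s = y0 :: nil /\ t = inl y0 :: nil) \/
   (exists y0 y1 ys d1 ds, s = y0 :: y1 :: ys /\ t = ydstr y0 (d1 :: ds) /\
      dchain y0 (y1 :: ys) (d1 :: ds))).

Definition disaggregator (u v : list (Y + D)) : Prop :=
  (u = nil /\ v = nil) \/
  (exists y0, u = inl y0 :: nil /\ v = inl y0 :: nil) \/
  (exists y0 d ds d' ds', u = ydstr y0 (d :: ds) /\ v = ydstr y0 (d' :: ds') /\
     msum d ds = msum d' ds').

Definition integrator (u v : list (Y + D)) : Prop :=
  (u = nil /\ v = nil) \/
  (exists y0, u = inl y0 :: nil /\ v = inl y0 :: nil) \/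
  (exists y0 d ds, u = ydstr y0 (d :: ds) /\ v = inl y0 :: inr (msum d ds) :: nil).

End Variator.

(* The integrator is a sub-relation of the disaggregator, since
   y0 d1 ... dm and y0 (d1 + ... + dm) have the same monoid sum, and it is
   total on the strings produced by the delta relation.  Shrinking a relation
   without losing totality preserves output simulation, so any device
   simulating F modulo delta;disaggregator also simulates it modulo
   delta;integrator. *)

From mathcomp Require Import ssreflect ssrfun ssrbool eqtype ssrnat seq choice fintype.
From Stdlib Require List.

Lemma output_simulates_subrel (A B C : Type) (F' : scd B C) (F : scd A C)
    (R R' : list A -> list B -> Prop) :
  (forall s t, R' s t -> R s t) ->
  (forall s t, R s t -> exists t', R' s t') ->
  output_simulates F' F R -> output_simulates F' F R'.
Proof.
move=> subR' totR' simR s Ls; have [[t [_ Rst]] simRs] := simR s Ls.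
split=> [|t' R'st']; last exact/simRs/subR'.
have [t' R'st'] := totR' s t Rst.
by exists t'; split=> //; case: (simRs t' (subR' s t' R'st')).
Qed.

Lemma rcomp_subr (A B E : Type) (R1 : A -> B -> Prop) (R2 R2' : B -> E -> Prop) :
  (forall r t, R2' r t -> R2 r t) ->
  forall s t, rcomp R1 R2' s t -> rcomp R1 R2 s t.
Proof. by move=> subR2 s t [r [R1sr R2'rt]]; exists r; split=> //; apply: subR2. Qed.

Lemma rcomp_total (A B E : Type) (R1 : A -> B -> Prop) (R2 R2' : B -> E -> Prop) :
  (forall s r, R1 s r -> exists t, R2' r t) ->
  forall s t, rcomp R1 R2 s t -> exists t', rcomp R1 R2' s t'.
Proof.
move=> totR2' s t [r [R1sr _]]; have [t' R2'rt'] := totR2' s r R1sr.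
by exists t', r.
Qed.

Section Integrator.
Variables (Y D : Type) (M : monoidal_variator Y D).

Lemma integrator_disaggregator (u v : list (Y + D)) :
  integrator M u v -> disaggregator M u v.
Proof.
case=> [uv0|[[y0 uv1]|[y0 [d [ds [-> ->]]]]]]; [by left | by right; left; exists y0 |].
by right; right; exists y0, d, ds, (msum M d ds), nil; split.
Qed.

Lemma delta_rel_integrator_total (C : Type) (F : scd Y C) s r :
  delta_rel M F s r -> exists t, integrator M r t.
Proof.
case=> _ [[_ ->]|[[y0 [_ ->]]|[y0 [_ [_ [d1 [ds [_ [-> _]]]]]]]]].
- by exists nil; left.
- by exists (inl y0 :: nil); right; left; exists y0.
- by exists (inl y0 :: inr (msum M d1 ds) :: nil); right; right; exists y0, d1, ds.
Qed.

End Integrator.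

Theorem lemma7 (Y D C : Type) (M : monoidal_variator Y D) (F : scd Y C)
  (HY : forall y : Y, List.In y (obs F)) :
  (exists F' : scd (Y + D) C,
      output_simulates F' F (rcomp (delta_rel M F) (disaggregator M))) ->
  exists F' : scd (Y + D) C,
      output_simulates F' F (rcomp (delta_rel M F) (integrator M)).
Proof.
case=> F' simF'; exists F'; apply: output_simulates_subrel simF'.
- exact/rcomp_subr/integrator_disaggregator.
- exact/rcomp_total/delta_rel_integrator_total.
Qed.
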